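(* Let $\Gamma\subset\mathbf{Z}^n$ be an almost periodic pattern, $\varepsilon>0$, $\delta>0$ and $A\in GL_n(\mathbf{R})$. Then there exist $R_{\varepsilon,\delta}>0$ and a relatively dense set $\widetilde{\mathcal N}_{\varepsilon,\delta}$ such that: for all $R\ge R_{\varepsilon,\delta}$ and all $v\in\widetilde{\mathcal N}_{\varepsilon,\delta}$, $D_R^+\big((\Gamma+v)\Delta\Gamma\big)<\varepsilon$; for every $v\in\widetilde{\mathcal N}_{\varepsilon,\delta}$, $d_\infty(Av,\mathbf{Z}^n)<\delta$; and for every $i\in I_\mathbf{Q}(A)$ and every $v\in\widetilde{\mathcal N}_{\varepsilon,\delta}$, $(Av)_i\in\mathbf{Z}$.
   Context: Balls are for the sup norm: $B(x,R)=\{y:\max_i|x_i-y_i|<R\}$; $d_\infty$ is the distance induced by the sup norm. Relatively dense: there is $R_0>0$ such that every ball of radius at least $R_0$ meets the set; uniformly discrete: there is $r>0$ such that every ball of radius at most $r$ contains at most one point; Delone: both. $D_R^+(\Gamma)=\sup_{x\in\mathbf{R}^n}\frac{\operatorname{Card}(B(x,R)\cap\Gamma)}{\operatorname{Card}(B(x,R)\cap\mathbf{Z}^n)}$. A Delone set $\Gamma\subset\mathbf{Z}^n$ is an almost periodic pattern if for every $\varepsilon>0$ there exist $R_\varepsilon>0$ and a relatively dense set $\mathcal N_\varepsilon$ with $D_R^+((\Gamma+v)\Delta\Gamma)<\varepsilon$ for all $R\ge R_\varepsilon$, $v\in\mathcal N_\varepsilon$. For $A=(a_{i,j})\in GL_n(\mathbf{R})$,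 $I_\mathbf{Q}(A)$ is the set of row indices $i$ such that $a_{i,j}\in\mathbf{Q}$ for every $j\in\{1,\dots,n\}$. *)

From HB Require Import structures.
From mathcomp Require Import all_boot all_order all_algebra.
From mathcomp Require Import all_classical all_reals.
From mathcomp Require Import finmap.
Set Implicit Arguments. Unset Strict Implicit. Unset Printing Implicit Defensive.
Import Order.TTheory GRing.Theory Num.Theory.
Local Open Scope ring_scope.
Local Open Scope classical_set_scope.

Definition intv (R : realType) (n : nat) (z : 'cV[int]_n) : 'cV[R]_n :=
  map_mx (fun k : int => k%:~R) z.

Definition supnorm (R : realType) (n : nat) (x : 'cV[R]_n) : R :=
  \big[Num.max/0]_(i < n) `|x i 0|.

Definition zball (R : realType) (n : nat) (x : 'cV[R]_n) (r : R) : set 'cV[int]_n :=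
  [set z | supnorm (x - intv R z) < r].

Definition relatively_dense (R : realType) (n : nat) (S : set 'cV[int]_n) : Prop :=
  exists R0 : R, 0 < R0 /\
    forall (x : 'cV[R]_n) (r : R), R0 <= r -> (zball x r `&` S) !=set0.

Definition uniformly_discrete (R : realType) (n : nat) (S : set 'cV[int]_n) : Prop :=
  exists r0 : R, 0 < r0 /\
    forall (x : 'cV[R]_n) (r : R), r <= r0 ->
      forall y z, (zball x r `&` S) y -> (zball x r `&` S) z -> y = z.

Definition delone (R : realType) (n : nat) (S : set 'cV[int]_n) : Prop :=
  relatively_dense R S /\ uniformly_discrete R S.

Definition densUp (R : realType) (n : nat) (r : R) (S : set 'cV[int]_n) : R :=
  sup [set d : R | exists x : 'cV[R]_n,
        d = ((#|` fset_set (zball x r `&` S)|)%fset%:R / (#|` fset_set (zball x r)|)%fset%:R)].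

Definition translate (n : nat) (S : set 'cV[int]_n) (v : 'cV[int]_n) : set 'cV[int]_n :=
  [set g + v | g in S].

Definition symdiff (T : Type) (A B : set T) : set T := (A `\` B) `|` (B `\` A).

Definition almost_periodic_pattern (R : realType) (n : nat) (G : set 'cV[int]_n) : Prop :=
  delone R G /\
  forall eps : R, 0 < eps ->
    exists Re : R, 0 < Re /\ exists N : set 'cV[int]_n, relatively_dense R N /\
      forall r : R, Re <= r -> forall v, N v ->
        densUp r (symdiff (translate G v) G) < eps.

Definition dist_Zn (R : realType) (n : nat) (x : 'cV[R]_n) : R :=
  inf [set d : R | exists z : 'cV[int]_n, d = supnorm (x - intv R z)].

Definition in_IQ (R : realType) (n : nat) (A : 'M[R]_n) (i : 'I_n) : Prop :=
  forall j : 'I_n, exists q : rat, A i j = ratr q.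

From HB Require Import structures.
From mathcomp Require Import all_boot all_order all_algebra.
From mathcomp Require Import all_classical all_reals.
From mathcomp Require Import finmap ring lra zify.
Set Implicit Arguments. Unset Strict Implicit. Unset Printing Implicit Defensive.
Import Order.TTheory GRing.Theory Num.Theory.
Local Open Scope ring_scope.
Local Open Scope classical_set_scope.

(* Take a relatively dense set N of (eps/2)-almost periods, sort its elements v
   into finitely many cells according to the subinterval of length 1/(K+1)
   containing each fractional part of the coordinates of A v, and subtract from
   each v a fixed representative w(v) of its cell.  The differences v - w(v) are
   still relatively dense (the representatives are bounded), they are
   eps-almost periods because the density of (Gamma + v) Delta Gamma is
   subadditive in v, and A (v - w(v)) lies within 1/(K+1) of an integer vector.
   Choosing K + 1 above 1/delta and above a common denominator D of the rational
   rows of A gives the last two properties: for a rational row, D (A (v - w(v)))_i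
   is an integer within distance < 1 of D times an integer. *)

Section SupNorm.
Variables (R : realType) (n : nat).
Implicit Types (x y : 'cV[R]_n) (z w : 'cV[int]_n).

Lemma intvD z w : intv R (z + w) = intv R z + intv R w.
Proof. by apply/matrixP => i j; rewrite !mxE intrD. Qed.

Lemma intvB z w : intv R (z - w) = intv R z - intv R w.
Proof. by apply/matrixP => i j; rewrite !mxE intrB. Qed.

Lemma supnorm_ge0 x : 0 <= supnorm x.
Proof.
by rewrite /supnorm; apply: (big_ind (fun t => 0 <= t)) => // a b a0 b0; rewrite le_max a0.
Qed.

Lemma ler_coord_supnorm x i : `|x i 0| <= supnorm x.
Proof. exact: le_bigmax. Qed.

Lemma supnorm_lt x c : 0 < c -> (forall i, `|x i 0| < c) -> supnorm x < c.
Proof.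
move=> c0 xc; rewrite /supnorm; apply: (big_ind (fun t => t < c)) => // a b ac bc.
by rewrite gt_max ac bc.
Qed.

Lemma supnormD x y : supnorm (x + y) <= supnorm x + supnorm y.
Proof.
apply: bigmax_le => [|i _]; first by rewrite addr_ge0 ?supnorm_ge0.
rewrite mxE; apply: le_trans (ler_normD _ _) _.
by rewrite lerD ?ler_coord_supnorm.
Qed.

Lemma dist_Zn_le x z : dist_Zn x <= supnorm (x - intv R z).
Proof.
apply: ge_inf; last by exists z.
by exists 0 => _ [z' ->]; apply: supnorm_ge0.
Qed.

Lemma finite_zball x (r : R) : finite_set (zball x r).
Proof.
pose M := (Num.trunc (supnorm x + r)).+1.
have zM z : zball x r z -> forall i, (`|z i 0| < M%:Z)%R.
  move=> xz i; rewrite -(ltr_int R) intr_norm.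
  apply: le_lt_trans (truncnS_gt _).
  have -> : (z i 0)%:~R = x i 0 - (x - intv R z) i 0 :> R.
    by rewrite !mxE opprB addrC subrK.
  apply: le_trans (ler_normB _ _) _; rewrite lerD ?ler_coord_supnorm //.
  exact/ltW/(le_lt_trans (ler_coord_supnorm _ i)).
pose g (f : {ffun 'I_n -> 'I_(M + M).+1}) : 'cV[int]_n :=
  \col_i ((f i : nat)%:Z - M%:Z).
apply: (sub_finite_set (B := range g)); last exact/finite_image/finite_finset.
move=> z xz; exists [ffun i => inord (absz (z i 0 + M%:Z))] => //.
apply/matrixP => i j; rewrite !mxE ffunE (ord1 j).
move: (zM z xz i); rewrite ltr_norml => /andP[/ltW zlo /ltW zhi].
have zM0 : (0 <= z i 0 + M%:Z)%R by rewrite -lerBlDr sub0r.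
rewrite inordK; first by rewrite (gez0_abs zM0) addrK.
by rewrite ltnS -lez_nat (gez0_abs zM0) PoszD lerD2r.
Qed.

End SupNorm.

Lemma card_fset_set_le (T : choiceType) (A B : set T) :
  finite_set B -> A `<=` B -> (#|` fset_set A| <= #|` fset_set B|)%N.
Proof.
move=> fB AB; apply: fsubset_leq_card.
by rewrite -fset_set_sub //; apply: sub_finite_set fB.
Qed.

Lemma card_fset_set_inj (T U : choiceType) (A : set T) (B : set U) (f : T -> U) :
  finite_set A -> finite_set B -> injective f -> f @` A `<=` B ->
  (#|` fset_set A| <= #|` fset_set B|)%N.
Proof.
move=> fA fB f_inj fAB.
have -> : #|` fset_set A| = #|` (f @` fset_set A)%fset|.
  by apply/esym/eqP/card_in_imfsetP => x y _ _; apply: f_inj.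
by rewrite -fset_set_image //; apply: card_fset_set_le.
Qed.

Lemma card_fset_setU (T : choiceType) (A B : set T) :
  finite_set A -> finite_set B ->
  (#|` fset_set (A `|` B)| <= #|` fset_set A| + #|` fset_set B|)%N.
Proof. by move=> fA fB; rewrite fset_setU //; apply: leq_card_fsetU. Qed.

Section UpperDensity.
Variables (R : realType) (n : nat).
Implicit Types (x : 'cV[R]_n) (S : set 'cV[int]_n) (r : R).

Definition zball_freq r x S : R :=
  (#|` fset_set (zball x r `&` S)|)%fset%:R / (#|` fset_set (zball x r)|)%fset%:R.

Lemma zball_freq_le1 r x S : zball_freq r x S <= 1.
Proof.
rewrite /zball_freq; have [->|ne0] := eqVneq #|` fset_set (zball x r)| 0%N.
  by rewrite invr0 mulr0.
rewrite ler_pdivrMr ?ltr0n ?lt0n // mul1r ler_nat.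
by apply: card_fset_set_le (finite_zball _ _) _ => z [].
Qed.

Lemma zball_freq_le_densUp r x S : zball_freq r x S <= densUp r S.
Proof.
apply: ub_le_sup; last by exists x.
by exists 1 => _ [y ->]; apply: zball_freq_le1.
Qed.

Lemma densUp_le r S c : (forall x, zball_freq r x S <= c) -> densUp r S <= c.
Proof.
move=> Sc; apply: ge_sup; first by exists (zball_freq r 0 S), 0.
by move=> _ [y ->]; apply: Sc.
Qed.

Lemma zball_translateE x r (w z : 'cV[int]_n) :
  zball (x + intv R w) r (z + w) = zball x r z.
Proof. by rewrite /zball /= intvD opprD addrACA subrr addr0. Qed.

Lemma card_zball_translate x r (w : 'cV[int]_n) :
  #|` fset_set (zball (x + intv R w) r)| = #|` fset_set (zball x r)|.
Proof.
have card_le y y' (u : 'cV[int]_n) : (+%R^~ u) @` zball y r `<=` zball y' r ->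
    (#|` fset_set (zball y r)| <= #|` fset_set (zball y' r)|)%N.
  exact: card_fset_set_inj (finite_zball _ _) (finite_zball _ _) (addIr _).
apply/eqP; rewrite eqn_leq (card_le _ _ (- w)) ?(card_le _ _ w) //.
- by move=> _ [z xz <-]; rewrite zball_translateE.
- by move=> _ [z xz <-]; rewrite -(zball_translateE _ _ w) subrK.
Qed.

Lemma densUp_le_translate_cover r S S1 S2 (w : 'cV[int]_n) :
  (forall z, S z -> (S1 `|` S2) (z + w)) -> densUp r S <= densUp r S1 + densUp r S2.
Proof.
move=> cover; apply: densUp_le => x; set y := x + intv R w.
apply: le_trans (lerD (zball_freq_le_densUp r y S1) (zball_freq_le_densUp r y S2)).
rewrite /zball_freq card_zball_translate -mulrDl ler_wpM2r ?invr_ge0 // -natrD ler_nat.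
have fin (y' : 'cV[R]_n) (A : set 'cV[int]_n) : finite_set (zball y' r `&` A).
  by apply: sub_finite_set (finite_zball y' r) => z [].
apply: leq_trans _ (card_fset_setU (fin _ _) (fin _ _)); rewrite -setIUr.
apply: card_fset_set_inj (fin _ _) (fin _ _) (addIr w) _.
by move=> _ [z [xz Sz] <-]; split; [rewrite zball_translateE | apply: cover].
Qed.

End UpperDensity.

Lemma translateE n (G : set 'cV[int]_n) v y : translate G v y = G (y - v).
Proof.
rewrite propeqE; split=> [[g Gg <-]|Gy]; first by rewrite addrK.
by exists (y - v); rewrite ?subrK.
Qed.

Lemma symdiff_translateB n (G : set 'cV[int]_n) v w z :
  symdiff (translate G (v - w)) G z ->
  (symdiff (translate G v) G `|` symdiff (translate G w) G) (z + w).
Proof.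
have e : z + w - v = z - (v - w) by rewrite opprB addrA.
rewrite /symdiff /= !translateE e addrK.
by have [|] := pselect (G (z + w)); tauto.
Qed.

Lemma densUp_symdiff_translateB (R : realType) n (G : set 'cV[int]_n) (r : R) v w :
  densUp r (symdiff (translate G (v - w)) G) <=
  densUp r (symdiff (translate G v) G) + densUp r (symdiff (translate G w) G).
Proof. exact/densUp_le_translate_cover/symdiff_translateB. Qed.

Lemma common_denominator (s : seq rat) :
  exists2 D : nat, (0 < D)%N & forall q, q \in s -> exists k : int, D%:R * q = k%:~R.
Proof.
elim: s => [|q s [D D0 Ds]]; first by exists 1%N.
exists (D * `|denq q|)%N; first by rewrite muln_gt0 D0 absz_gt0 denq_neq0.
move=> q'; rewrite inE => /orP[/eqP ->|/Ds [k Dk]].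
  exists (D%:Z * numq q); rewrite natrM -mulrA intrM.
  congr (_ * _); rewrite natr_absz gtr0_norm ?denq_gt0 //.
  by rewrite -[X in _ * X](divq_num_den q) mulrC divfK // intr_eq0 denq_neq0.
by exists (k * `|denq q|%N); rewrite natrM mulrAC Dk intrM pmulrn.
Qed.

Lemma in_IQ_common_denominator (R : realType) n (A : 'M[R]_n) :
  exists2 D : nat, (0 < D)%N &
    forall i, in_IQ A i -> forall j, exists k : int, D%:R * A i j = k%:~R.
Proof.
have rat_entry (p : 'I_n * 'I_n) : exists q : rat, in_IQ A p.1 -> A p.1 p.2 = ratr q.
  by have [/(_ p.2) [q ->]|] := pselect (in_IQ A p.1); [exists q | exists 0].
have [q Aq] := boolp.choice rat_entry.
have [D D0 Dq] := common_denominator [seq q p | p <- enum {: 'I_n * 'I_n}].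
exists D => // i iQ j; have [k Dk] := Dq (q (i, j)) (map_f _ (mem_enum _ _)).
exists k; rewrite (Aq (i, j) iQ).
by move/(congr1 (@ratr R)): Dk; rewrite rmorphM /= rmorph_nat ratr_int.
Qed.

Lemma mulmx_intv_row_int (R : realType) m n (A : 'M[R]_(m, n)) (D : R) i :
  (forall j, exists k : int, D * A i j = k%:~R) ->
  forall v : 'cV[int]_n, exists k : int, D * (A *m intv R v) i 0 = k%:~R.
Proof.
move=> Ai v; have [k Dk] := boolp.choice Ai.
exists (\sum_j k j * v j 0); rewrite mxE mulr_sumr rmorph_sum.
by apply: eq_bigr => j _; rewrite mxE mulrA Dk rmorphM.
Qed.

Lemma int_eq_of_near (R : realType) (D : nat) (a : R) (k m : int) :
  (0 < D)%N -> D%:R * a = k%:~R -> `|a - m%:~R| < D%:R^-1 -> a = m%:~R.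
Proof.
move=> D0 Dak am.
have : `|(k - D%:Z * m)%:~R : R| < 1.
  rewrite intrB intrM -Dak -mulrBr normrM ger0_norm ?ler0n //.
  by rewrite mulrC -ltr_pdivlMr ?ltr0n // mul1r.
rewrite -intr_norm -[1 : R]/((1 : int)%:~R) ltr_int => km1.
have km : k = D%:Z * m by lia.
by apply: (mulfI (x := D%:R)); rewrite ?pnatr_eq0 -?lt0n // Dak km intrM.
Qed.

Section FractionalCells.
Variable R : realType.

Definition fracr (a : R) : R := a - (Num.floor a)%:~R.

Lemma fracr_ge0 a : 0 <= fracr a.
Proof. by rewrite subr_ge0 floor_le. Qed.

Lemma fracr_lt1 a : fracr a < 1.
Proof. by rewrite ltrBlDr addrC -[1]/((1 : int)%:~R) -intrD floorD1_gt. Qed.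

Lemma floor_eq_dist_lt1 (a b : R) : Num.floor a = Num.floor b -> `|a - b| < 1.
Proof.
move=> e; have := floor_le a; have := floorD1_gt a.
have := floor_le b; have := floorD1_gt b.
rewrite e intrD ltr_norml => *; apply/andP; split; lra.
Qed.

Definition frac_bin (K : nat) (a : R) : nat := absz (Num.floor (K.+1%:R * fracr a)).

Lemma frac_bin_ge0 K a : (0 <= Num.floor (K.+1%:R * fracr a))%R.
Proof. by rewrite floor_ge0 mulr_ge0 ?fracr_ge0. Qed.

Lemma frac_bin_lt K a : (frac_bin K a < K.+1)%N.
Proof.
rewrite -ltz_nat gez0_abs ?frac_bin_ge0 // -(ltr_int R).
apply: le_lt_trans (floor_le _) _.
by rewrite -[X in _ < X]mulr1 ltr_pM2l ?ltr0n ?fracr_lt1.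
Qed.

Lemma frac_bin_eq K a b :
  frac_bin K a = frac_bin K b -> `|fracr a - fracr b| < K.+1%:R^-1.
Proof.
move/(congr1 Posz); rewrite !gez0_abs ?frac_bin_ge0 // => /floor_eq_dist_lt1.
by rewrite -mulrBr normrM ger0_norm ?ler0n // mulrC -ltr_pdivlMr ?ltr0n // mul1r.
Qed.

Definition frac_cell n K (x : 'cV[R]_n) : {ffun 'I_n -> 'I_K.+1} :=
  [ffun i => inord (frac_bin K (x i 0))].

Lemma frac_cell_eq_near_int n K (x y : 'cV[R]_n) :
  frac_cell K x = frac_cell K y ->
  exists z : 'cV[int]_n, forall i, `|(x - y) i 0 - (z i 0)%:~R| < K.+1%:R^-1.
Proof.
move=> xy; exists (\col_i (Num.floor (x i 0) - Num.floor (y i 0))) => i.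
have : frac_bin K (x i 0) = frac_bin K (y i 0).
  move/(congr1 (fun c : {ffun 'I_n -> 'I_K.+1} => val (c i))): xy.
  by rewrite /= !ffunE !inordK ?frac_bin_lt.
move/frac_bin_eq; congr (`|_| < _); rewrite !mxE /fracr intrB; ring.
Qed.

End FractionalCells.

Lemma relatively_dense_class_differences (R : realType) n (T : finType)
    (f : 'cV[int]_n -> T) (N : set 'cV[int]_n) :
  relatively_dense R N -> exists w : 'cV[int]_n -> 'cV[int]_n,
    (forall v, N v -> N (w v) /\ f (w v) = f v) /\
    relatively_dense R [set v - w v | v in N].
Proof.
move=> [R0 [R0_gt0 N_dense]].
have class_rep c : exists u, (exists2 v, N v & f v = c) -> N u /\ f u = c.
  by have [[v Nv <-]|] := pselect (exists2 v, N v & f v = c); [exists v | exists 0].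
have [rep repP] := boolp.choice class_rep.
pose W := \big[Num.max/0]_(c : T) supnorm (intv R (rep c)).
have repW c : supnorm (intv R (rep c)) <= W by apply: le_bigmax.
have W0 : 0 <= W.
  apply: (big_ind (fun t => 0 <= t)) => // [a b a0 b0|c _].
  - by rewrite le_max a0.
  - exact: supnorm_ge0.
exists (fun v => rep (f v)); split=> [v Nv|]; first by apply: repP; exists v.
exists (R0 + W); split=> [|x r r_ge]; first by rewrite ltr_wpDr.
have [v [xv Nv]] := N_dense x R0 (lexx _).
exists (v - rep (f v)); split; last by exists v.
rewrite /zball /= intvB opprB addrA addrAC.
apply: le_lt_trans (supnormD _ _) (lt_le_trans _ r_ge).
exact: ltr_leD xv (repW _).
Qed.

Theorem lemmaB3 (R : realType) (n : nat) (Gamma : set 'cV[int]_n)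
  (eps delta : R) (A : 'M[R]_n) :
  almost_periodic_pattern R Gamma -> 0 < eps -> 0 < delta -> A \in unitmx ->
  exists Red : R, 0 < Red /\
  exists N : set 'cV[int]_n, relatively_dense R N /\
    (forall r : R, Red <= r -> forall v, N v ->
       densUp r (symdiff (translate Gamma v) Gamma) < eps) /\
    (forall v, N v -> dist_Zn (A *m intv R v) < delta) /\
    (forall i : 'I_n, in_IQ A i -> forall v, N v ->
       exists k : int, (A *m intv R v) i 0 = k%:~R).
Proof.
move=> [_ ap] eps0 delta0 _.
have [Re [Re0 [N [N_dense N_eps]]]] := ap (eps / 2) (divr_gt0 eps0 (ltr0Sn _ 1)).
have [D D0 DA] := in_IQ_common_denominator A.
pose K := (D + `|Num.ceil delta^-1|)%N.
have K_delta : K.+1%:R^-1 < delta.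
  rewrite invf_plt ?posrE // (le_lt_trans (ceil_ge _)) //.
  apply: le_lt_trans (ler_norm _) _; rewrite -intr_norm -natr_absz ltr_nat.
  by rewrite ltnS leq_addl.
have K_D : K.+1%:R^-1 <= D%:R^-1 :> R.
  by rewrite lef_pV2 ?posrE ?ltr0n // ler_nat ltnW // ltnS leq_addr.
have [w [wN w_dense]] :=
  relatively_dense_class_differences (fun v => frac_cell K (A *m intv R v)) N_dense.
have near_int v : N v -> exists z : 'cV[int]_n,
    forall i, `|(A *m intv R (v - w v)) i 0 - (z i 0)%:~R| < K.+1%:R^-1.
  by move=> /wN[_ e]; rewrite intvB mulmxBr; apply: frac_cell_eq_near_int; rewrite e.
exists Re; split=> //; exists [set v - w v | v in N]; split=> //.
split; [|split] => [r r_ge _ [v Nv <-]|_ [v Nv <-]|i iQ _ [v Nv <-]].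
- apply: le_lt_trans (densUp_symdiff_translateB _ _ _ _) _.
  by rewrite (splitr eps) ltrD // N_eps //; case: (wN v Nv).
- have [z z_near] := near_int v Nv.
  apply: le_lt_trans (dist_Zn_le _ z) (supnorm_lt delta0 _) => i.
  by apply: lt_trans _ K_delta; move: (z_near i); rewrite !mxE.
- have [z z_near] := near_int v Nv; exists (z i 0).
  have [k Dk] := mulmx_intv_row_int (DA i iQ) (v - w v).
  exact: int_eq_of_near D0 Dk (lt_le_trans (z_near i) K_D).
Qed.
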